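(* Let $(\mathcal{C},\mathbb{E},\mathfrak{s})$ satisfy (ET1) and (ET2). If $\mathcal{J}$ is a special preenveloping ideal of $\mathcal{C}$, then the pair $({}^{\perp_{\mathbb{E}}}\mathcal{J},\mathcal{J})$ of ideals is an $\mathbb{E}$-cotorsion pair, i.e. $\mathcal{J}=({}^{\perp_{\mathbb{E}}}\mathcal{J})^{\perp_{\mathbb{E}}}$.
   Context: $\mathcal{C}$ additive, $\mathbb{E}:\mathcal{C}^{\mathrm{op}}\times\mathcal{C}\to\mathrm{Ab}$ biadditive (ET1); for $\delta\in\mathbb{E}(C,A)$, $a:A\to A'$, $c:C'\to C$ put $a_\star\delta=\mathbb{E}(C,a)(\delta)$, $c^\star\delta=\mathbb{E}(c,A)(\delta)$. (ET2): $\mathfrak{s}$ is an additive realization (Nakaoka–Palu): each $\delta\in\mathbb{E}(C,A)$ is assigned an equivalence class of sequences $A\to B\to C$ (up to isomorphism of middle terms), $0$ is realized by split sequences, realization respects direct sums, and if $a_\star\delta=c^\star\delta'$ there is a middle map making the realizing sequences commute. Realized pairs are $\mathbb{E}$-triangles $A\to B\to C\overset{\delta}{\dashrightarrow}$; such commuting triples $(a,b,c)$ with $a_\star\delta=c^\star\delta'$ are morphisms of $\mathbb{E}$-triangles. An ideal: class of morphisms with zeros, closed under sums and two-sided composition. $\mathcal{M}^{\perp_{\mathbb{E}}}=\{g:A\to Y\mid m^\star g_\star\delta=0\ \forall m\in\mathcal{M},\,m:X\to C,\ \forall\delta\in\mathbb{E}(C,A)\}$; ${}^{\perp_{\mathbb{E}}}\mathcal{M}=\{g:X\to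 C\mid g^\star m_\star\delta=0\ \forall m\in\mathcal{M},\,m:A\to Y,\ \forall\delta\in\mathbb{E}(C,A)\}$. An $\mathbb{E}$-cotorsion pair is $(\mathcal{I},\mathcal{J})$ with $\mathcal{I}={}^{\perp_{\mathbb{E}}}\mathcal{J}$, $\mathcal{J}=\mathcal{I}^{\perp_{\mathbb{E}}}$. A special $\mathcal{J}$-preenvelope of $A$ is $e:A\to X$ in $\mathcal{J}$ with $\mathbb{E}$-triangles $A\xrightarrow{e}X\to Y\overset{\delta}{\dashrightarrow}$, $A\to B\to C\overset{\delta'}{\dashrightarrow}$ and a morphism of $\mathbb{E}$-triangles $(\mathrm{id}_A,b,j)$ from the first to the second with $j\in{}^{\perp_{\mathbb{E}}}\mathcal{J}$. $\mathcal{J}$ is special preenveloping if every object has a special $\mathcal{J}$-preenvelope. *)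

From HB Require Import structures.
From mathcomp Require Import all_boot all_algebra.
Set Implicit Arguments. Unset Strict Implicit. Unset Printing Implicit Defensive.
Import GRing.Theory.
Local Open Scope ring_scope.

Record AddCat := {
  Ob :> Type;
  Hom : Ob -> Ob -> zmodType;
  comp : forall A B C : Ob, Hom B C -> Hom A B -> Hom A C;
  idm : forall A : Ob, Hom A A;
  comp_assoc : forall (A B C D : Ob) (h : Hom C D) (g : Hom B C) (f : Hom A B),
      comp h (comp g f) = comp (comp h g) f;
  comp_idl : forall (A B : Ob) (f : Hom A B), comp (idm B) f = f;
  comp_idr : forall (A B : Ob) (f : Hom A B), comp f (idm A) = f;
  comp_addl : forall (A B C : Ob) (g g' : Hom B C) (f : Hom A B),
      comp (g + g') f = comp g f + comp g' f;
  comp_addr : forall (A B C : Ob) (g : Hom B C) (f f' : Hom A B),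
      comp g (f + f') = comp g f + comp g f';
  zob : Ob;
  zob_zero : idm zob = 0;
  bp : Ob -> Ob -> Ob;
  bp_i1 : forall A B : Ob, Hom A (bp A B);
  bp_i2 : forall A B : Ob, Hom B (bp A B);
  bp_p1 : forall A B : Ob, Hom (bp A B) A;
  bp_p2 : forall A B : Ob, Hom (bp A B) B;
  bp_p1i1 : forall A B : Ob, comp (bp_p1 A B) (bp_i1 A B) = idm A;
  bp_p2i2 : forall A B : Ob, comp (bp_p2 A B) (bp_i2 A B) = idm B;
  bp_p1i2 : forall A B : Ob, comp (bp_p1 A B) (bp_i2 A B) = 0;
  bp_p2i1 : forall A B : Ob, comp (bp_p2 A B) (bp_i1 A B) = 0;
  bp_sum : forall A B : Ob,
      comp (bp_i1 A B) (bp_p1 A B) + comp (bp_i2 A B) (bp_p2 A B) = idm (bp A B)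
}.

Arguments Hom {C} : rename.
Arguments comp {C A B C0} : rename.
Arguments idm {C} : rename.
Arguments bp {C} : rename.
Arguments bp_i1 {C} : rename.
Arguments bp_i2 {C} : rename.
Arguments bp_p1 {C} : rename.
Arguments bp_p2 {C} : rename.

Section AddCatDefs.
Variable C : AddCat.

Definition mor_sum (A A' B B' : C) (f : Hom A B) (f' : Hom A' B') :
    Hom (bp A A') (bp B B') :=
  comp (bp_i1 B B') (comp f (bp_p1 A A')) + comp (bp_i2 B B') (comp f' (bp_p2 A A')).

Definition seq_equiv (A D B B' : C) (x : Hom A B) (y : Hom B D)
    (x' : Hom A B') (y' : Hom B' D) : Prop :=
  exists (b : Hom B B') (b' : Hom B' B),
    [/\ comp b b' = idm B', comp b' b = idm B, comp b x = x' & comp y' b = y].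

Definition MorClass := forall A B : C, Hom A B -> Prop.

Definition is_ideal (I : MorClass) : Prop :=
  [/\ (forall A B : C, I A B 0),
      (forall (A B : C) (f g : Hom A B), I A B f -> I A B g -> I A B (f + g))
    & (forall (A B D E : C) (h : Hom D E) (f : Hom B D) (g : Hom A B),
          I B D f -> I A E (comp h (comp f g)))].
End AddCatDefs.

(** * (ET1): a biadditive functor  E : C^op x C -> Ab.
    [Ext D A] is E(D, A); [push a] is a_star = E(D, a), [pull c] is c^star = E(c, A). *)
Record ET1 (C : AddCat) := {
  Ext : C -> C -> zmodType;
  push : forall (D A A' : C), Hom A A' -> Ext D A -> Ext D A';
  pull : forall (D' D A : C), Hom D' D -> Ext D A -> Ext D' A;
  push_add : forall (D A A' : C) (a : Hom A A') (d d' : Ext D A),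
      push a (d + d') = push a d + push a d';
  pull_add : forall (D' D A : C) (c : Hom D' D) (d d' : Ext D A),
      pull c (d + d') = pull c d + pull c d';
  push_addm : forall (D A A' : C) (a a' : Hom A A') (d : Ext D A),
      push (a + a') d = push a d + push a' d;
  pull_addm : forall (D' D A : C) (c c' : Hom D' D) (d : Ext D A),
      pull (c + c') d = pull c d + pull c' d;
  push_id : forall (D A : C) (d : Ext D A), push (idm A) d = d;
  pull_id : forall (D A : C) (d : Ext D A), pull (idm D) d = d;
  push_comp : forall (D A A' A'' : C) (a' : Hom A' A'') (a : Hom A A') (d : Ext D A),
      push (comp a' a) d = push a' (push a d);
  pull_comp : forall (D'' D' D A : C) (c' : Hom D'' D') (c : Hom D' D) (d : Ext D A),
      pull (comp c c') d = pull c' (pull c d);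
  push_pull : forall (D' D A A' : C) (a : Hom A A') (c : Hom D' D) (d : Ext D A),
      push a (pull c d) = pull c (push a d)
}.

Arguments Ext {C} E : rename.
Arguments push {C} E {D A A'} : rename.
Arguments pull {C} E {D' D A} : rename.

Section ETDefs.
Variables (C : AddCat) (E : ET1 C).

(** a realization: the relation "A -x-> B -y-> D realizes d in E(D, A)" *)
Definition Realization :=
  forall (A D : C), Ext E D A -> forall B : C, Hom A B -> Hom B D -> Prop.

Definition ext_sum (A A' D D' : C) (d : Ext E D A) (d' : Ext E D' A') :
    Ext E (bp D D') (bp A A') :=
  push E (bp_i1 A A') (pull E (bp_p1 D D') d)
  + push E (bp_i2 A A') (pull E (bp_p2 D D') d').

Definition is_additive_realization (s : Realization) : Prop :=
      (forall (A D : C) (d : Ext E D A), exists (B : C) (x : Hom A B) (y : Hom B D),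
          s A D d B x y) /\
      (forall (A D : C) (d : Ext E D A) (B B' : C) (x : Hom A B) (y : Hom B D)
          (x' : Hom A B') (y' : Hom B' D),
          s A D d B x y -> s A D d B' x' y' -> seq_equiv x y x' y') /\
      (forall (A D : C) (d : Ext E D A) (B B' : C) (x : Hom A B) (y : Hom B D)
          (x' : Hom A B') (y' : Hom B' D),
          s A D d B x y -> seq_equiv x y x' y' -> s A D d B' x' y') /\
      (forall A D : C, s A D 0 (bp A D) (bp_i1 A D) (bp_p2 A D)) /\
      (forall (A D B A' D' B' : C) (d : Ext E D A) (d' : Ext E D' A')
          (x : Hom A B) (y : Hom B D) (x' : Hom A' B') (y' : Hom B' D'),
          s A D d B x y -> s A' D' d' B' x' y' ->
          s (bp A A') (bp D D') (ext_sum d d') (bp B B') (mor_sum x x') (mor_sum y y')) /\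
      (forall (A D B A' D' B' : C) (d : Ext E D A) (d' : Ext E D' A')
          (x : Hom A B) (y : Hom B D) (x' : Hom A' B') (y' : Hom B' D')
          (a : Hom A A') (c : Hom D D'),
          s A D d B x y -> s A' D' d' B' x' y' -> push E a d = pull E c d' ->
          exists b : Hom B B', comp b x = comp x' a /\ comp c y = comp y' b).

Definition is_tri_morphism (A B D A' B' D' : C)
    (x : Hom A B) (y : Hom B D) (d : Ext E D A)
    (x' : Hom A' B') (y' : Hom B' D') (d' : Ext E D' A')
    (a : Hom A A') (b : Hom B B') (c : Hom D D') : Prop :=
  [/\ comp b x = comp x' a, comp c y = comp y' b & push E a d = pull E c d'].

Definition perpR (M : MorClass C) : MorClass C :=
  fun (A Y : C) (g : Hom A Y) =>
    forall (X D : C) (m : Hom X D), M X D m ->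
      forall d : Ext E D A, pull E m (push E g d) = 0.

Definition perpL (M : MorClass C) : MorClass C :=
  fun (X D : C) (g : Hom X D) =>
    forall (A Y : C) (m : Hom A Y), M A Y m ->
      forall d : Ext E D A, pull E g (push E m d) = 0.

Arguments perpR M A B g : clear implicits.
Arguments perpL M A B g : clear implicits.

Definition same_class (I J : MorClass C) : Prop :=
  forall (A B : C) (f : Hom A B), I A B f <-> J A B f.

Definition is_cotorsion_pair (I J : MorClass C) : Prop :=
  same_class I (perpL J) /\ same_class J (perpR I).

Definition special_preenvelope (s : Realization) (J : MorClass C) (A X : C)
    (e : Hom A X) : Prop :=
  J A X e /\
  exists (Y : C) (y : Hom X Y) (d : Ext E Y A)
         (B D : C) (x' : Hom A B) (y' : Hom B D) (d' : Ext E D A)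
         (b : Hom X B) (j : Hom Y D),
    [/\ s A Y d X e y, s A D d' B x' y',
        is_tri_morphism e y d x' y' d' (idm A) b j
      & perpL J Y D j].

Definition special_preenveloping (s : Realization) (J : MorClass C) : Prop :=
  forall A : C, exists (X : C) (e : Hom A X), special_preenvelope s J e.
End ETDefs.

From mathcomp Require Import all_boot all_algebra.

(* One inclusion J <= (⊥J)^⊥ is formal.  Conversely, let g : A -> Y
   lie in (⊥J)^⊥ and let A -e-> X -> Y0 -d-> be the E-triangle of a special
   J-preenvelope, mapped by (1, b, j) to a triangle with extension d', j in ⊥J.
   Then d = j^* d', so g_* d = j^* g_* d' = 0, hence g factors through the
   inflation e; as J is an ideal and e is in J, so is g. *)

Set Implicit Arguments.
Unset Strict Implicit.
Unset Printing Implicit Defensive.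
Local Open Scope ring_scope.

Section Orthogonality.
Variables (C : AddCat) (E : ET1 C).

Definition sub_class (I J : MorClass C) : Prop :=
  forall (A B : C) (f : Hom A B), I A B f -> J A B f.

Lemma sub_perpR_perpL (M : MorClass C) : sub_class M (perpR E (perpL E M)).
Proof. by move=> A Y g Mg X D m Hm d; apply: Hm. Qed.

Lemma ideal_compl (J : MorClass C) : is_ideal J ->
  forall (A X Y : C) (h : Hom X Y) (e : Hom A X), J A X e -> J A Y (comp h e).
Proof.
case=> _ _ J_comp A X Y h e Je.
by rewrite -[e in comp h e](comp_idr e); apply: J_comp.
Qed.

(* The exactness of Hom(X, Y) -> Hom(A, Y) -> E(Y0, Y) at Hom(A, Y): compare the
   triangle of d with the split triangle of 0 along (g, 1). *)
Lemma push_eq0_factor (s : Realization E) : is_additive_realization s ->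
  forall (A X Y0 : C) (e : Hom A X) (y : Hom X Y0) (d : Ext E Y0 A),
  s A Y0 d X e y ->
  forall (Y : C) (g : Hom A Y), push E g d = 0 ->
  exists h : Hom X Y, g = comp h e.
Proof.
case=> _ [_ [_ [s_split [_ s_morphism]]]] A X Y0 e y d sd Y g gd0.
have gd_pull : push E g d = pull E (idm Y0) (0 : Ext E Y0 Y).
  by rewrite pull_id.
have [b [be _]] := s_morphism _ _ _ _ _ _ _ _ _ _ _ _ g (idm Y0)
  sd (s_split Y Y0) gd_pull.
exists (comp (bp_p1 Y Y0) b).
by rewrite -comp_assoc be comp_assoc bp_p1i1 comp_idl.
Qed.

Lemma special_preenvelope_push_perp (s : Realization E) (J : MorClass C)
    (A X : C) (e : Hom A X) :
  special_preenvelope s J e ->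
  exists (Y0 : C) (y : Hom X Y0) (d : Ext E Y0 A),
    s A Y0 d X e y /\
    forall (Y : C) (g : Hom A Y), perpR E (perpL E J) g -> push E g d = 0.
Proof.
case=> _ [Y0 [y [d [B [D [_ [_ [d' [_ [j [sd _ [_ _ dj] Jj]]]]]]]]]]].
exists Y0, y, d; split=> // Y g g_perp.
move: dj; rewrite push_id => ->.
by rewrite push_pull; apply: g_perp.
Qed.

Lemma perpR_perpL_sub (s : Realization E) (J : MorClass C) :
  is_additive_realization s -> is_ideal J -> special_preenveloping s J ->
  sub_class (perpR E (perpL E J)) J.
Proof.
move=> Hs HJ HJsp A Y g g_perp.
have [X [e e_special]] := HJsp A.
have [Y0 [y [d [sd d_perp]]]] := special_preenvelope_push_perp e_special.
have [h ->] := push_eq0_factor Hs sd (d_perp Y g g_perp).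
by apply: ideal_compl; case: e_special.
Qed.

End Orthogonality.

Theorem theorem3p13 (C : AddCat) (E : ET1 C) (s : Realization E)
    (Hs : is_additive_realization s)
    (J : MorClass C) (HJ : is_ideal J) (HJsp : special_preenveloping s J) :
  is_cotorsion_pair E (perpL E J) J.
Proof.
split=> A B f; first by [].
split; first exact: sub_perpR_perpL.
exact: perpR_perpL_sub Hs HJ HJsp A B f.
Qed.
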